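(* Let $S$ be the surface of revolution $\boldsymbol{x}(u,v)=(p(u)\cos v,\,p(u)\sin v,\,q(u))$ with nowhere vanishing Gaussian curvature, and suppose $\Delta^{II}\boldsymbol{x}=A\boldsymbol{x}$ for a real $3\times3$ matrix $A=(a_{ij})$. Then $A=\mathrm{diag}(\lambda,\lambda,\mu)$ for some real numbers $\lambda,\mu$, i.e. $a_{12}=a_{13}=a_{21}=a_{23}=a_{31}=a_{32}=0$ and $a_{11}=a_{22}$. Moreover $\lambda$ and $\mu$ are not both zero, i.e. there is no such surface with $\Delta^{II}\boldsymbol{x}=0$.
   Context: Here $p,q$ are smooth on an interval $(a,b)$, $p>0$, $(p')^{2}+(q')^{2}=1$, $v\in[0,2\pi)$. Let $\boldsymbol{n}$ be the unit normal $\frac{\boldsymbol{x}_{u}\times\boldsymbol{x}_{v}}{\|\boldsymbol{x}_{u}\times\boldsymbol{x}_{v}\|}$ and $II=b_{ij}du^{i}du^{j}$ the second fundamental form, $b_{ij}=\langle \boldsymbol{x}_{u^iu^j},\boldsymbol{n}\rangle$, $(u^1,u^2)=(u,v)$; nonvanishing Gaussian curvature makes $(b_{ij})$ invertible with inverse $(b^{ij})$, and $b=\det(b_{ij})$. For smooth $f$, $\Delta^{II}f=-\frac{1}{\sqrt{|b|}}\partial_{u^{i}}\big(\sqrt{|b|}\,b^{ij}\partial_{u^{j}}f\big)$, and $\Delta^{II}\boldsymbol{x}$ is applied componentwise to the coordinate functions $(x_1,x_2,x_3)$ of $\boldsymbol{x}$. *)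

From Stdlib Require Import Reals.
From Coquelicot Require Import Coquelicot.
Open Scope R_scope.

(* Vectors of R^3 are coordinate functions nat -> R (coordinates 0,1,2). *)
Definition vec3 := nat -> R.
Definition dot3 (x y : vec3) : R := x 0%nat * y 0%nat + x 1%nat * y 1%nat + x 2%nat * y 2%nat.
Definition cross3 (x y : vec3) : vec3 := fun i =>
  match i with
  | 0%nat => x 1%nat * y 2%nat - x 2%nat * y 1%nat
  | 1%nat => x 2%nat * y 0%nat - x 0%nat * y 2%nat
  | _ => x 0%nat * y 1%nat - x 1%nat * y 0%nat
  end.
Definition norm3 (x : vec3) : R := sqrt (dot3 x x).

(* A parametrized surface: coordinate i of x(u,v) is  x i u v. *)
Definition surf := nat -> R -> R -> R.

(* partial derivative w.r.t. u^k, with (u^0,u^1) = (u,v) *)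
Definition pd (k : nat) (f : R -> R -> R) : R -> R -> R := fun u v =>
  match k with
  | 0%nat => Derive (fun s => f s v) u
  | _ => Derive (fun t => f u t) v
  end.

Definition xd (x : surf) (k : nat) (u v : R) : vec3 := fun c => pd k (x c) u v.
Definition xdd (x : surf) (k l : nat) (u v : R) : vec3 := fun c => pd k (pd l (x c)) u v.

Definition unit_normal (x : surf) (u v : R) : vec3 := fun c =>
  cross3 (xd x 0 u v) (xd x 1 u v) c / norm3 (cross3 (xd x 0 u v) (xd x 1 u v)).

Definition fff (x : surf) (i j : nat) (u v : R) : R := dot3 (xd x i u v) (xd x j u v).
Definition sff (x : surf) (i j : nat) (u v : R) : R := dot3 (xdd x i j u v) (unit_normal x u v).

Definition det2 (m : nat -> nat -> R) : R := m 0%nat 0%nat * m 1%nat 1%nat - m 0%nat 1%nat * m 1%nat 0%nat.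

Definition sff_det (x : surf) (u v : R) : R := det2 (fun i j => sff x i j u v).

Definition gauss_curv (x : surf) (u v : R) : R :=
  sff_det x u v / det2 (fun i j => fff x i j u v).

Definition sff_inv (x : surf) (i j : nat) (u v : R) : R :=
  match i, j with
  | 0%nat, 0%nat => sff x 1 1 u v / sff_det x u v
  | 1%nat, 1%nat => sff x 0 0 u v / sff_det x u v
  | _, _ => - sff x i j u v / sff_det x u v
  end.

Definition LapII (x : surf) (f : R -> R -> R) (u v : R) : R :=
  let sb := fun s t => sqrt (Rabs (sff_det x s t)) in
  - / sb u v *
   (pd 0 (fun s t => sb s t * (sff_inv x 0 0 s t * pd 0 f s t + sff_inv x 0 1 s t * pd 1 f s t)) u v
  + pd 1 (fun s t => sb s t * (sff_inv x 1 0 s t * pd 0 f s t + sff_inv x 1 1 s t * pd 1 f s t)) u v).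

Definition rev_surf (p q : R -> R) : surf := fun c u v =>
  match c with
  | 0%nat => p u * cos v
  | 1%nat => p u * sin v
  | _ => q u
  end.

Definition smooth_on (a b : R) (f : R -> R) : Prop :=
  forall (n : nat) (u : R), a < u < b -> ex_derive_n f n u.

From Stdlib Require Import Reals Lra Lia FunctionalExtensionality.
From Coquelicot Require Import Coquelicot.
Open Scope R_scope.

(* For the surface of revolution x = (p cos v, p sin v, q) with
   unit-speed meridian, the unit normal is n = (-q' cos v, -q' sin v, p'), and
   the second fundamental form is diagonal: b11 = k := p'q'' - p''q' and
   b22 = p q'.  Hence Delta^II only involves u-derivatives of explicit profile
   functions, and a direct computation gives
     Delta^II x1 = cos v * F(u),  Delta^II x2 = sin v * F(u),  Delta^II x3 = G(u)
   for two functions F, G of u alone.  Comparing  F cos v  with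
   a11 p cos v + a12 p sin v + a13 q  at v = 0, pi/2, pi (and similarly for the
   other rows) forces A = diag(lam, lam, mu) with F = lam p and G = mu q, using
   p > 0 and that q is not identically zero (as q' <> 0 when K <> 0).
   Finally F = G = 0 at a point is impossible: writing the u-fluxes as
   H1 = sqrt|b| p'/k and H3 = sqrt|b| q'/k we have H1 = H3 (p'/q'), and
   G = 0, F = 0 then give  -sqrt|b|/q' = sqrt|b|/q', a contradiction. *)

Lemma pd_u_separated (g h : R -> R) :
  pd 0 (fun s t => g s * h t) = fun s t => Derive g s * h t.
Proof. do 2 (apply functional_extensionality; intro). unfold pd. apply Derive_scal_l. Qed.

Lemma pd_v_separated (g h : R -> R) :
  pd 1 (fun s t => g s * h t) = fun s t => g s * Derive h t.
Proof. do 2 (apply functional_extensionality; intro). unfold pd. apply Derive_scal. Qed.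

Lemma pd_u_profile (g : R -> R) : pd 0 (fun s t => g s) = fun s t => Derive g s.
Proof. reflexivity. Qed.

Lemma pd_v_profile (g : R -> R) : pd 1 (fun s t => g s) = fun s t => 0.
Proof. do 2 (apply functional_extensionality; intro). unfold pd. apply Derive_const. Qed.

Lemma Derive_cos_fun : Derive cos = fun t => - sin t.
Proof. apply functional_extensionality; intro. apply is_derive_unique, is_derive_cos. Qed.

Lemma Derive_sin_fun : Derive sin = cos.
Proof. apply functional_extensionality; intro. apply is_derive_unique, is_derive_sin. Qed.

(* cos and sin solve h'' = -h; this is what makes x1, x2 eigen-like in v. *)
Lemma Derive2_cos (t : R) : Derive (Derive cos) t = - cos t.
Proof. rewrite Derive_cos_fun, Derive_opp, Derive_sin_fun. reflexivity. Qed.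

Lemma Derive2_sin (t : R) : Derive (Derive sin) t = - sin t.
Proof. rewrite Derive_sin_fun, Derive_cos_fun. reflexivity. Qed.

Lemma rev_surf_x1 (p q : R -> R) : rev_surf p q 0%nat = fun s t => p s * cos t.
Proof. reflexivity. Qed.
Lemma rev_surf_x2 (p q : R -> R) : rev_surf p q 1%nat = fun s t => p s * sin t.
Proof. reflexivity. Qed.
Lemma rev_surf_x3 (p q : R -> R) : rev_surf p q 2%nat = fun s t => q s.
Proof. reflexivity. Qed.

Ltac rev_surf_simpl :=
  repeat first
    [ rewrite rev_surf_x1 | rewrite rev_surf_x2 | rewrite rev_surf_x3
    | rewrite pd_u_separated | rewrite pd_v_separated
    | rewrite pd_u_profile | rewrite pd_v_profile
    | rewrite Derive_cos_fun | rewrite Derive_sin_fun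
    | rewrite Derive_opp | rewrite Derive_const ].

Lemma interval_locally (a b u : R) : a < u < b -> locally u (fun s => a < s < b).
Proof. exact (open_and _ _ (open_gt a) (open_lt b) u). Qed.

(* A function vanishing near u0 has zero derivative there; contrapositively a
   nonzero derivative forces a nonzero value somewhere in the interval. *)
Lemma nonzero_of_Derive_nonzero (a b : R) (f : R -> R) (u0 : R) :
  a < u0 < b -> Derive f u0 <> 0 -> exists u, a < u < b /\ f u <> 0.
Proof.
  intros Hu0 Hf. apply Classical_Prop.NNPP. intros Hnone. apply Hf.
  rewrite (Derive_ext_loc _ (fun _ => 0)); [apply Derive_const |].
  eapply filter_imp; [| exact (interval_locally a b u0 Hu0)].
  intros s Hs. apply Classical_Prop.NNPP. intros Hfs. apply Hnone. exists s. split; assumption.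
Qed.

Lemma ex_derive_sqrt_abs (f : R -> R) (x : R) :
  ex_derive f x -> f x <> 0 -> ex_derive (fun y => sqrt (Rabs (f y))) x.
Proof.
  intros [df Hdf] Hfx. eexists. apply is_derive_sqrt.
  - apply is_derive_Rabs; [exact Hdf | exact Hfx].
  - apply Rabs_pos_lt, Hfx.
Qed.

Lemma trig_coeffs_zero (X Y Z : R) :
  (forall v, 0 <= v < 2 * PI -> X * cos v + Y * sin v + Z = 0) ->
  X = 0 /\ Y = 0 /\ Z = 0.
Proof.
  intros H. pose proof PI_RGT_0.
  pose proof (H 0 ltac:(lra)) as E0.
  pose proof (H (PI / 2) ltac:(lra)) as E1.
  pose proof (H PI ltac:(lra)) as E2.
  rewrite cos_0, sin_0 in E0. rewrite cos_PI2, sin_PI2 in E1.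
  rewrite cos_PI, sin_PI in E2. lra.
Qed.

Lemma factor_zero (x y : R) : x * y = 0 -> y <> 0 -> x = 0.
Proof. intros Hxy Hy. destruct (Rmult_integral _ _ Hxy); [assumption | contradiction]. Qed.

Definition b11 (p q : R -> R) (s : R) : R :=
  Derive p s * Derive (Derive q) s - Derive (Derive p) s * Derive q s.
Definition b22 (p q : R -> R) (s : R) : R := p s * Derive q s.
Definition bdet (p q : R -> R) (s : R) : R := b11 p q s * b22 p q s.

Lemma bdet_nonzero_factors (p q : R -> R) (s : R) : bdet p q s <> 0 ->
  b11 p q s <> 0 /\ p s <> 0 /\ Derive q s <> 0.
Proof.
  unfold bdet, b22. intros Hb.
  repeat split; intro Z; apply Hb; rewrite Z; ring.
Qed.

Lemma rev_surf_normal (p q : R -> R) (s t : R) :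
  0 < p s -> Derive p s ^ 2 + Derive q s ^ 2 = 1 ->
  unit_normal (rev_surf p q) s t 0%nat = - (Derive q s * cos t) /\
  unit_normal (rev_surf p q) s t 1%nat = - (Derive q s * sin t) /\
  unit_normal (rev_surf p q) s t 2%nat = Derive p s.
Proof.
  intros Hp Hunit. pose proof (sin2_cos2 t) as Htrig. unfold Rsqr in Htrig.
  assert (Hnorm : norm3 (cross3 (xd (rev_surf p q) 0 s t) (xd (rev_surf p q) 1 s t)) = p s).
  { unfold norm3, dot3, cross3, xd. rev_surf_simpl.
    transitivity (sqrt (p s ^ 2)); [f_equal | apply sqrt_pow2; lra].
    transitivity (p s ^ 2 * (Derive q s ^ 2 * (sin t * sin t + cos t * cos t)
                   + Derive p s ^ 2 * (sin t * sin t + cos t * cos t) ^ 2)); [ring |].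
    rewrite Htrig. replace (Derive p s ^ 2) with (1 - Derive q s ^ 2) by lra. ring. }
  unfold unit_normal. rewrite Hnorm. unfold cross3, xd. rev_surf_simpl.
  repeat split; [field; lra | field; lra |].
  replace (Derive p s * cos t * (p s * cos t) - Derive p s * sin t * (p s * - sin t))
    with (Derive p s * p s * (sin t * sin t + cos t * cos t)) by ring.
  rewrite Htrig. field. lra.
Qed.

Lemma rev_surf_sff (p q : R -> R) (s t : R) :
  0 < p s -> Derive p s ^ 2 + Derive q s ^ 2 = 1 ->
  sff (rev_surf p q) 0%nat 0%nat s t = b11 p q s /\
  sff (rev_surf p q) 0%nat 1%nat s t = 0 /\
  sff (rev_surf p q) 1%nat 0%nat s t = 0 /\
  sff (rev_surf p q) 1%nat 1%nat s t = b22 p q s.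
Proof.
  intros Hp Hunit. destruct (rev_surf_normal p q s t Hp Hunit) as [N0 [N1 N2]].
  pose proof (sin2_cos2 t) as Htrig. unfold Rsqr in Htrig.
  unfold sff, dot3. rewrite N0, N1, N2. unfold xdd, b11, b22. rev_surf_simpl.
  repeat split; [| ring | ring |].
  - transitivity (Derive p s * Derive (Derive q) s
                  - Derive (Derive p) s * Derive q s * (sin t * sin t + cos t * cos t)); [ring |].
    rewrite Htrig. ring.
  - transitivity (p s * Derive q s * (sin t * sin t + cos t * cos t)); [ring |].
    rewrite Htrig. ring.
Qed.

Section Revolution.
Variables (a b : R) (p q : R -> R).
Hypothesis p_pos : forall u, a < u < b -> 0 < p u.
Hypothesis unit_speed : forall u, a < u < b -> Derive p u ^ 2 + Derive q u ^ 2 = 1.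

Lemma rev_surf_sff_det (s t : R) : a < s < b -> sff_det (rev_surf p q) s t = bdet p q s.
Proof.
  intros Hs. destruct (rev_surf_sff p q s t (p_pos s Hs) (unit_speed s Hs)) as [E0 [E1 [E2 E3]]].
  unfold sff_det, det2, bdet. rewrite E0, E1, E2, E3. ring.
Qed.

Lemma rev_surf_sff_inv (s t : R) : a < s < b ->
  sff_inv (rev_surf p q) 0%nat 0%nat s t = b22 p q s / bdet p q s /\
  sff_inv (rev_surf p q) 0%nat 1%nat s t = 0 /\
  sff_inv (rev_surf p q) 1%nat 0%nat s t = 0 /\
  sff_inv (rev_surf p q) 1%nat 1%nat s t = b11 p q s / bdet p q s.
Proof.
  intros Hs. destruct (rev_surf_sff p q s t (p_pos s Hs) (unit_speed s Hs)) as [E0 [E1 [E2 E3]]].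
  unfold sff_inv. rewrite (rev_surf_sff_det s t Hs), E0, E1, E2, E3.
  unfold Rdiv. repeat split; ring.
Qed.

Lemma bdet_nonzero :
  (forall u v, a < u < b -> 0 <= v < 2 * PI -> gauss_curv (rev_surf p q) u v <> 0) ->
  forall s, a < s < b -> bdet p q s <> 0.
Proof.
  intros HK s Hs Hzero. pose proof PI_RGT_0.
  apply (HK s 0 Hs ltac:(lra)). unfold gauss_curv.
  rewrite (rev_surf_sff_det s 0 Hs), Hzero. unfold Rdiv. ring.
Qed.

(* The weight sqrt|b|, the u-fluxes H1, H3 of the radial and axial
   coordinates, the zero-order term coming from the v-derivatives, and the
   resulting profile functions F, G with Delta^II x = (F cos v, F sin v, G). *)
Definition sqrt_bdet (s : R) : R := sqrt (Rabs (bdet p q s)).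
Definition radial_flux (s : R) : R := sqrt_bdet s * (b22 p q s / bdet p q s * Derive p s).
Definition axial_flux (s : R) : R := sqrt_bdet s * (b22 p q s / bdet p q s * Derive q s).
Definition angular_term (s : R) : R := sqrt_bdet s * (b11 p q s / bdet p q s * p s).
Definition lap_radial (u : R) : R := - / sqrt_bdet u * (Derive radial_flux u - angular_term u).
Definition lap_axial (u : R) : R := - / sqrt_bdet u * Derive axial_flux u.

Lemma LapII_rotational (h : R -> R) (u v : R) :
  (forall t, Derive (Derive h) t = - h t) -> a < u < b ->
  LapII (rev_surf p q) (fun s t => p s * h t) u v = h v * lap_radial u.
Proof.
  intros Hh Hu. unfold LapII. cbv zeta.
  rewrite pd_u_separated, pd_v_separated. unfold pd. rewrite (rev_surf_sff_det u v Hu).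
  rewrite (Derive_ext_loc _ (fun s => radial_flux s * h v)).
  2:{ eapply filter_imp; [| exact (interval_locally a b u Hu)]. intros s Hs. cbv beta.
      destruct (rev_surf_sff_inv s v Hs) as [I0 [I1 _]].
      rewrite I0, I1, (rev_surf_sff_det s v Hs). unfold radial_flux, sqrt_bdet. ring. }
  match goal with |- context [Derive ?f v] =>
    rewrite (Derive_ext f (fun t => angular_term u * Derive h t)) end.
  2:{ intros t. cbv beta. destruct (rev_surf_sff_inv u t Hu) as [_ [_ [I2 I3]]].
      rewrite I2, I3, (rev_surf_sff_det u t Hu). unfold angular_term, sqrt_bdet. ring. }
  rewrite Derive_scal_l, Derive_scal, Hh. unfold lap_radial, sqrt_bdet. ring.
Qed.

Lemma LapII_axial (u v : R) : a < u < b ->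
  LapII (rev_surf p q) (rev_surf p q 2%nat) u v = lap_axial u.
Proof.
  intros Hu. unfold LapII. cbv zeta. rev_surf_simpl. unfold pd.
  rewrite (rev_surf_sff_det u v Hu).
  rewrite (Derive_ext_loc _ axial_flux).
  2:{ eapply filter_imp; [| exact (interval_locally a b u Hu)]. intros s Hs. cbv beta.
      destruct (rev_surf_sff_inv s v Hs) as [I0 [I1 _]].
      rewrite I0, I1, (rev_surf_sff_det s v Hs). unfold axial_flux, sqrt_bdet. ring. }
  match goal with |- context [Derive ?f v] => rewrite (Derive_ext f (fun t => 0)) end.
  2:{ intros t. cbv beta. destruct (rev_surf_sff_inv u t Hu) as [_ [_ [I2 _]]].
      rewrite I2. ring. }
  rewrite Derive_const. unfold lap_axial, sqrt_bdet. ring.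
Qed.

Lemma eigen_coefficients (A : nat -> nat -> R) :
  (forall (i : nat) u v, (i < 3)%nat -> a < u < b -> 0 <= v < 2 * PI ->
     LapII (rev_surf p q) (rev_surf p q i) u v =
     A i 0%nat * rev_surf p q 0%nat u v + A i 1%nat * rev_surf p q 1%nat u v
     + A i 2%nat * rev_surf p q 2%nat u v) ->
  forall u, a < u < b ->
  lap_radial u = A 0%nat 0%nat * p u /\ lap_radial u = A 1%nat 1%nat * p u /\
  lap_axial u = A 2%nat 2%nat * q u /\
  A 0%nat 1%nat * p u = 0 /\ A 0%nat 2%nat * q u = 0 /\ A 1%nat 0%nat * p u = 0 /\
  A 1%nat 2%nat * q u = 0 /\ A 2%nat 0%nat * p u = 0 /\ A 2%nat 1%nat * p u = 0.
Proof.
  intros Hlap u Hu.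
  destruct (trig_coeffs_zero (lap_radial u - A 0%nat 0%nat * p u)
              (- (A 0%nat 1%nat * p u)) (- (A 0%nat 2%nat * q u))) as [X0 [Y0 Z0]].
  { intros v Hv. pose proof (Hlap 0%nat u v ltac:(lia) Hu Hv) as E.
    rewrite rev_surf_x1, (LapII_rotational cos u v Derive2_cos Hu) in E. simpl in E. lra. }
  destruct (trig_coeffs_zero (- (A 1%nat 0%nat * p u))
              (lap_radial u - A 1%nat 1%nat * p u) (- (A 1%nat 2%nat * q u))) as [X1 [Y1 Z1]].
  { intros v Hv. pose proof (Hlap 1%nat u v ltac:(lia) Hu Hv) as E.
    rewrite rev_surf_x2, (LapII_rotational sin u v Derive2_sin Hu) in E. simpl in E. lra. }
  destruct (trig_coeffs_zero (- (A 2%nat 0%nat * p u)) (- (A 2%nat 1%nat * p u))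
              (lap_axial u - A 2%nat 2%nat * q u)) as [X2 [Y2 Z2]].
  { intros v Hv. pose proof (Hlap 2%nat u v ltac:(lia) Hu Hv) as E.
    rewrite (LapII_axial u v Hu) in E. simpl in E. lra. }
  repeat split; lra.
Qed.

Lemma radial_flux_slope (s : R) : bdet p q s <> 0 ->
  radial_flux s = axial_flux s * (Derive p s / Derive q s).
Proof.
  intros Hb. destruct (bdet_nonzero_factors p q s Hb) as [Hk [Hp Hq']].
  unfold radial_flux, axial_flux, bdet, b22. field. auto.
Qed.

Lemma not_harmonic (u0 : R) :
  smooth_on a b p -> smooth_on a b q ->
  (forall s, a < s < b -> bdet p q s <> 0) -> a < u0 < b ->
  lap_radial u0 = 0 -> lap_axial u0 = 0 -> False.
Proof.
  intros Sp Sq Hb Hu0 HF HG.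
  pose proof (Sp 1%nat u0 Hu0) as Dp. pose proof (Sp 2%nat u0 Hu0) as Dp'.
  pose proof (Sp 3%nat u0 Hu0) as Dp''. pose proof (Sq 1%nat u0 Hu0) as Dq.
  pose proof (Sq 2%nat u0 Hu0) as Dq'. pose proof (Sq 3%nat u0 Hu0) as Dq''.
  simpl in Dp, Dp', Dp'', Dq, Dq', Dq''.
  pose proof (Hb u0 Hu0) as Hb0.
  destruct (bdet_nonzero_factors p q u0 Hb0) as [Hk [Hp Hq']].
  assert (Hw : 0 < sqrt_bdet u0) by (apply sqrt_lt_R0, Rabs_pos_lt, Hb0).
  assert (Hinv : / sqrt_bdet u0 <> 0) by (apply Rinv_neq_0_compat; lra).
  assert (Dbdet : ex_derive (bdet p q) u0).
  { unfold bdet, b11, b22. auto_derive. repeat split; assumption. }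
  assert (Daxial : ex_derive axial_flux u0).
  { unfold axial_flux. apply ex_derive_mult; [exact (ex_derive_sqrt_abs _ _ Dbdet Hb0) |].
    apply ex_derive_mult; [| exact Dq'].
    apply (ex_derive_div (b22 p q) (bdet p q)); [| exact Dbdet | exact Hb0].
    unfold b22. apply ex_derive_mult; assumption. }
  assert (Haxial : Derive axial_flux u0 = 0).
  { unfold lap_axial in HG. destruct (Rmult_integral _ _ HG); [lra | assumption]. }
  assert (Hradial : Derive radial_flux u0 = angular_term u0).
  { unfold lap_radial in HF. destruct (Rmult_integral _ _ HF); lra. }
  rewrite (Derive_ext_loc _ (fun s => axial_flux s * (Derive p s / Derive q s))) in Hradial.
  2:{ eapply filter_imp; [| exact (interval_locally a b u0 Hu0)].
      intros s Hs. exact (radial_flux_slope s (Hb s Hs)). }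
  assert (Dslope : ex_derive (fun s => Derive p s / Derive q s) u0)
    by (apply ex_derive_div; assumption).
  rewrite Derive_mult, Haxial, Derive_div in Hradial by assumption.
  assert (Hleft : axial_flux u0 *
            ((Derive (Derive p) u0 * Derive q u0 - Derive p u0 * Derive (Derive q) u0)
             / Derive q u0 ^ 2) = - (sqrt_bdet u0 / Derive q u0)).
  { unfold axial_flux, bdet, b11, b22 in Hk |- *. field. auto. }
  assert (Hright : angular_term u0 = sqrt_bdet u0 / Derive q u0).
  { unfold angular_term, bdet, b22. field. auto. }
  assert (Hzero : sqrt_bdet u0 * / Derive q u0 = 0) by (unfold Rdiv in *; lra).
  pose proof (factor_zero _ _ Hzero (Rinv_neq_0_compat _ Hq')). lra.
Qed.

End Revolution.

Theorem mainTheorem2 (a b : R) (p q : R -> R) (A : nat -> nat -> R) :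
  a < b ->
  smooth_on a b p -> smooth_on a b q ->
  (forall u, a < u < b -> 0 < p u) ->
  (forall u, a < u < b -> (Derive p u) ^ 2 + (Derive q u) ^ 2 = 1) ->
  (forall u v, a < u < b -> 0 <= v < 2 * PI -> gauss_curv (rev_surf p q) u v <> 0) ->
  (forall (i : nat) u v, (i < 3)%nat -> a < u < b -> 0 <= v < 2 * PI ->
     LapII (rev_surf p q) (rev_surf p q i) u v =
     A i 0%nat * rev_surf p q 0%nat u v + A i 1%nat * rev_surf p q 1%nat u v
     + A i 2%nat * rev_surf p q 2%nat u v) ->
  exists lam mu : R,
    A 0%nat 0%nat = lam /\ A 1%nat 1%nat = lam /\ A 2%nat 2%nat = mu /\
    A 0%nat 1%nat = 0 /\ A 0%nat 2%nat = 0 /\ A 1%nat 0%nat = 0 /\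
    A 1%nat 2%nat = 0 /\ A 2%nat 0%nat = 0 /\ A 2%nat 1%nat = 0 /\
    ~ (lam = 0 /\ mu = 0).
Proof.
  intros Hab Sp Sq Hp Hunit HK Hlap.
  pose proof (bdet_nonzero a b p q Hp Hunit HK) as Hb.
  pose proof (eigen_coefficients a b p q Hp Hunit A Hlap) as Hcoef.
  set (u0 := (a + b) / 2). assert (Hu0 : a < u0 < b) by (unfold u0; lra).
  (* q is not identically zero, since q' <> 0 wherever b <> 0. *)
  destruct (nonzero_of_Derive_nonzero a b q u0 Hu0) as [u1 [Hu1 Hq1]].
  { intro Z. apply (Hb u0 Hu0). unfold bdet, b22. rewrite Z. ring. }
  assert (Hp1 : p u1 <> 0) by (pose proof (Hp u1 Hu1); lra).
  destruct (Hcoef u1 Hu1) as [F0 [F1 [_ [E01 [E02 [E10 [E12 [E20 E21]]]]]]]].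
  exists (A 0%nat 0%nat), (A 2%nat 2%nat).
  repeat split; try (eapply factor_zero; eassumption).
  - assert (Hdiff : (A 1%nat 1%nat - A 0%nat 0%nat) * p u1 = 0) by lra.
    pose proof (factor_zero _ _ Hdiff Hp1). lra.
  - intros [Hlam Hmu]. destruct (Hcoef u0 Hu0) as [G0 [_ [G2 _]]].
    apply (not_harmonic a b p q u0 Sp Sq Hb Hu0).
    + rewrite G0, Hlam. ring.
    + rewrite G2, Hmu. ring.
Qed.
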